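(* Let $\mathcal{A}$ be an abelian category. (1) Let $M$ be a weak duo object of $\mathcal{A}$ having SSIP, and let $(N_i)_{i\in I}$ be a family of objects of $\mathcal{A}$ having a product. Then $\prod_{i\in I} N_i$ is strongly $M$-Rickart if and only if $N_i$ is strongly $M$-Rickart for every $i\in I$. (2) Let $(M_i)_{i\in I}$ be a family of objects of $\mathcal{A}$ having a coproduct, and let $N$ be a weak duo object of $\mathcal{A}$ having SSSP. Then $N$ is dual strongly $\bigoplus_{i\in I} M_i$-Rickart if and only if $N$ is dual strongly $M_i$-Rickart for every $i\in I$.
   Context: An object $M$ has the strong summand intersection property (SSIP) if the intersection of any family of direct summands of $M$ is a direct summand of $M$; it has the strong summand sum property (SSSP) if the sum of any family of direct summands of $M$ is a direct summand of $M$. A morphism $f:X\to Y$ is a section if $f'f=1_X$ for some $f'$, a retraction if $ff'=1_Y$ for some $f'$. A monomorphism $k:K\to X$ is fully invariant if for every $h:X\to X$ there is $\alpha:K\to K$ with $hk=k\alpha$; an epimorphism $c:X\to C$ is fully coinvariant if for every $h:X\to X$ there is $\gamma:C\to C$ with $ch=\gamma c$. An object is weak duo if every section into it is fully invariant (equivalently every retraction from it is fully coinvariant). $N$ is strongly $M$-Rickart if the kernel of every morphism $f:M\to N$ is a fully invariant section; $N$ is dual strongly $M$-Rickart if the cokernel of every morphism $f:M\to N$ is a fully coinvariant retraction (equivalently its image is a fully invariant section of $N$). *)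

From HB Require Import structures.
From mathcomp Require Import all_boot all_algebra.
Set Implicit Arguments. Unset Strict Implicit. Unset Printing Implicit Defensive.
Import GRing.Theory.
Local Open Scope ring_scope.

Record precategory := PreCategory {
  Ob :> Type;
  Mor : Ob -> Ob -> zmodType;
  comp : forall A B C : Ob, Mor B C -> Mor A B -> Mor A C;
  idm : forall A : Ob, Mor A A;
  compA : forall A B C D (h : Mor C D) (g : Mor B C) (f : Mor A B),
      comp h (comp g f) = comp (comp h g) f;
  comp1m : forall A B (f : Mor A B), comp (idm B) f = f;
  compm1 : forall A B (f : Mor A B), comp f (idm A) = f;
  compDl : forall A B C (g1 g2 : Mor B C) (f : Mor A B),
      comp (g1 + g2) f = comp g1 f + comp g2 f;
  compDr : forall A B C (g : Mor B C) (f1 f2 : Mor A B),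
      comp g (f1 + f2) = comp g f1 + comp g f2
}.
Arguments comp {p A B C}.
Arguments idm {p}.

Section Notions.
Variable C : precategory.

Definition mono (A B : C) (f : Mor A B) : Prop :=
  forall X (g h : Mor X A), comp f g = comp f h -> g = h.
Definition epi (A B : C) (f : Mor A B) : Prop :=
  forall Y (g h : Mor B Y), comp g f = comp h f -> g = h.

Definition is_kernel (A B : C) (f : Mor A B) (K : C) (k : Mor K A) : Prop :=
  comp f k = 0 /\
  forall X (g : Mor X A), comp f g = 0 -> exists! u : Mor X K, comp k u = g.
Definition is_cokernel (A B : C) (f : Mor A B) (Q : C) (c : Mor B Q) : Prop :=
  comp c f = 0 /\
  forall Y (g : Mor B Y), comp g f = 0 -> exists! u : Mor Q Y, comp u c = g.

Definition is_zero_object (Z : C) : Prop :=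
  forall X : C, (forall f g : Mor X Z, f = g) /\ (forall f g : Mor Z X, f = g).

Definition is_biproduct (A B S : C) (i1 : Mor A S) (i2 : Mor B S)
    (p1 : Mor S A) (p2 : Mor S B) : Prop :=
  [/\ comp p1 i1 = idm A, comp p2 i2 = idm B, comp p1 i2 = 0, comp p2 i1 = 0
    & comp i1 p1 + comp i2 p2 = idm S].

Definition is_abelian : Prop :=
  (exists Z : C, is_zero_object Z) /\
  [/\ (forall A B : C, exists S (i1 : Mor A S) (i2 : Mor B S) p1 p2,
          is_biproduct i1 i2 p1 p2),
      (forall (A B : C) (f : Mor A B), exists K (k : Mor K A), is_kernel f k),
      (forall (A B : C) (f : Mor A B), exists Q (c : Mor B Q), is_cokernel f c),
      (forall (A B : C) (f : Mor A B), mono f ->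
          exists D (g : Mor B D), is_kernel g f)
    & (forall (A B : C) (f : Mor A B), epi f ->
          exists D (g : Mor D A), is_cokernel g f)].

Definition section (X Y : C) (f : Mor X Y) : Prop :=
  exists f' : Mor Y X, comp f' f = idm X.
Definition retraction (X Y : C) (f : Mor X Y) : Prop :=
  exists f' : Mor Y X, comp f f' = idm Y.

Definition fully_invariant (K X : C) (k : Mor K X) : Prop :=
  mono k /\ forall h : Mor X X, exists a : Mor K K, comp h k = comp k a.
Definition fully_coinvariant (X Q : C) (c : Mor X Q) : Prop :=
  epi c /\ forall h : Mor X X, exists g : Mor Q Q, comp c h = comp g c.

Definition weak_duo (M : C) : Prop :=
  forall A (s : Mor A M), section s -> fully_invariant s.

Definition factors_through (A T X : C) (g : Mor A X) (t : Mor T X) : Prop :=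
  exists u : Mor A T, comp t u = g.

Definition is_intersection (M : C) (J : Type) (A : J -> C)
    (s : forall j, Mor (A j) M) (K : C) (k : Mor K M) : Prop :=
  [/\ mono k, forall j, factors_through k (s j)
    & forall T (t : Mor T M), mono t ->
        (forall j, factors_through t (s j)) -> factors_through t k].

Definition is_sum (M : C) (J : Type) (A : J -> C)
    (s : forall j, Mor (A j) M) (K : C) (k : Mor K M) : Prop :=
  [/\ mono k, forall j, factors_through (s j) k
    & forall T (t : Mor T M), mono t ->
        (forall j, factors_through (s j) t) -> factors_through k t].

(* direct summands of M = sections into M *)
Definition SSIP (M : C) : Prop :=
  forall (J : Type) (A : J -> C) (s : forall j, Mor (A j) M),
    (forall j, section (s j)) ->
    forall K (k : Mor K M), is_intersection s k -> section k.
Definition SSSP (M : C) : Prop :=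
  forall (J : Type) (A : J -> C) (s : forall j, Mor (A j) M),
    (forall j, section (s j)) ->
    forall K (k : Mor K M), is_sum s k -> section k.

Definition is_product (I : Type) (N : I -> C) (P : C)
    (p : forall i, Mor P (N i)) : Prop :=
  forall X (f : forall i, Mor X (N i)),
    exists! u : Mor X P, forall i, comp (p i) u = f i.
Definition is_coproduct (I : Type) (M : I -> C) (S : C)
    (e : forall i, Mor (M i) S) : Prop :=
  forall Y (f : forall i, Mor (M i) Y),
    exists! u : Mor S Y, forall i, comp u (e i) = f i.

(* N is strongly M-Rickart *)
Definition strongly_rickart (M N : C) : Prop :=
  forall (f : Mor M N) K (k : Mor K M),
    is_kernel f k -> section k /\ fully_invariant k.
(* N is dual strongly M-Rickart *)
Definition dual_strongly_rickart (M N : C) : Prop :=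
  forall (f : Mor M N) Q (c : Mor N Q),
    is_cokernel f c -> retraction c /\ fully_coinvariant c.

End Notions.

(* (1) A factor N_i is a direct summand of the product, and kernels do not
   change under post-composition with a monomorphism, so strong M-Rickartness
   descends to the factors.  Conversely, the kernel of f : M -> prod N_i is
   the intersection of the kernels of the components p_i f; these are direct
   summands of M, so by SSIP so is ker f, which is fully invariant because M
   is weak duo.
   (2) Dually, a factor M_i is a direct summand of the coproduct.  For the
   converse, the image of f : (+) M_i -> N is the sum of the images of the
   f e_i, which are kernels of retractions, hence direct summands of N.  By
   SSSP the image of f is a direct summand, fully invariant as N is weak duo,
   and coker f, being the cokernel of this image, is a fully coinvariant
   retraction. *)
From mathcomp Require Import ssreflect ssrfun ssrbool eqtype ssralg.
From Stdlib Require Import ClassicalEpsilon ProofIrrelevance.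
Set Implicit Arguments. Unset Strict Implicit. Unset Printing Implicit Defensive.
Import GRing.Theory.
Local Open Scope ring_scope.

Lemma dependent_functional_choice (I : Type) (T : I -> Type) (P : forall i, T i -> Prop) :
  (forall i, exists x, P i x) -> exists f : forall i, T i, forall i, P i (f i).
Proof.
move=> H; exists (fun i => proj1_sig (constructive_indefinite_description _ (H i))).
by move=> i; case: constructive_indefinite_description.
Qed.

Section Preadditive.
Variable C : precategory.

Lemma comp0m (A B D : C) (f : Mor A B) : comp (0 : Mor B D) f = 0.
Proof. by apply: (addrI (comp 0 f)); rewrite -compDl !addr0. Qed.

Lemma compm0 (A B D : C) (g : Mor B D) : comp g (0 : Mor A B) = 0.
Proof. by apply: (addrI (comp g 0)); rewrite -compDr !addr0. Qed.

Lemma compBl (A B D : C) (g1 g2 : Mor B D) (f : Mor A B) :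
  comp (g1 - g2) f = comp g1 f - comp g2 f.
Proof. by apply: (addIr (comp g2 f)); rewrite -compDl !subrK. Qed.

Lemma compBr (A B D : C) (g : Mor B D) (f1 f2 : Mor A B) :
  comp g (f1 - f2) = comp g f1 - comp g f2.
Proof. by apply: (addIr (comp g f2)); rewrite -compDr !subrK. Qed.

Lemma section_mono (A B : C) (f : Mor A B) : section f -> mono f.
Proof.
move=> [f' f'f] X g h fg_fh.
by rewrite -(comp1m g) -(comp1m h) -f'f -!compA fg_fh.
Qed.

Lemma retraction_epi (A B : C) (f : Mor A B) : retraction f -> epi f.
Proof.
move=> [f' ff'] Y g h gf_hf.
by rewrite -(compm1 g) -(compm1 h) -ff' !compA gf_hf.
Qed.

Lemma kernel_mono (A B K : C) (f : Mor A B) (k : Mor K A) :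
  is_kernel f k -> mono k.
Proof.
move=> [fk0 Hk] X g h kg_kh.
have fkg0 : comp f (comp k g) = 0 by rewrite compA fk0 comp0m.
have [u [_ u_uniq]] := Hk X _ fkg0.
by rewrite -(u_uniq g erefl) -(u_uniq h (esym kg_kh)).
Qed.

Lemma cokernel_epi (A B Q : C) (f : Mor A B) (c : Mor B Q) :
  is_cokernel f c -> epi c.
Proof.
move=> [cf0 Hc] Y g h gc_hc.
have gcf0 : comp (comp g c) f = 0 by rewrite -compA cf0 compm0.
have [u [_ u_uniq]] := Hc Y _ gcf0.
by rewrite -(u_uniq g erefl) -(u_uniq h (esym gc_hc)).
Qed.

Lemma kernel_comp_mono (A B B' K : C) (f : Mor A B) (u : Mor B B')
    (k : Mor K A) :
  mono u -> is_kernel f k -> is_kernel (comp u f) k.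
Proof.
move=> mono_u [fk0 Hk]; split; first by rewrite -compA fk0 compm0.
move=> X g ufg0; apply: Hk; apply: mono_u.
by rewrite compA ufg0 compm0.
Qed.

Lemma cokernel_comp_epi (A A' B Q : C) (f : Mor A B) (r : Mor A' A)
    (c : Mor B Q) :
  epi r -> is_cokernel f c -> is_cokernel (comp f r) c.
Proof.
move=> epi_r [cf0 Hc]; split; first by rewrite compA cf0 comp0m.
move=> Y g gfr0; apply: Hc; apply: epi_r.
by rewrite -compA gfr0 comp0m.
Qed.

Lemma kernel_retraction_section (A B K : C) (c : Mor A B) (a : Mor K A) :
  is_kernel c a -> retraction c -> section a.
Proof.
move=> ker_a [r cr]; case: (ker_a) => ca0 Ha.
have c_1rc : comp c (idm A - comp r c) = 0.
  by rewrite compBr compm1 compA cr comp1m subrr.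
have [s [as_ _]] := Ha _ _ c_1rc.
exists s; apply: (kernel_mono ker_a).
by rewrite compA as_ compBl comp1m -compA ca0 compm0 subr0 compm1.
Qed.

Lemma cokernel_section_retraction (K A Q : C) (k : Mor K A) (c : Mor A Q) :
  is_cokernel k c -> section k -> retraction c.
Proof.
move=> cok_c [s sk]; case: (cok_c) => ck0 Hc.
have _1ks_k : comp (idm A - comp k s) k = 0.
  by rewrite compBl comp1m -compA sk compm1 subrr.
have [r [rc _]] := Hc _ _ _1ks_k.
exists r; apply: (cokernel_epi cok_c).
by rewrite -compA rc compBr compm1 compA ck0 comp0m subr0 comp1m.
Qed.

Lemma cokernel_fully_coinvariant (K A Q : C) (k : Mor K A) (c : Mor A Q) :
  is_cokernel k c -> fully_invariant k -> fully_coinvariant c.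
Proof.
move=> cok_c [_ inv_k]; split; first exact: cokernel_epi cok_c.
move=> h; have [a ha] := inv_k h.
have chk0 : comp (comp c h) k = 0 by rewrite -compA ha compA cok_c.1 comp0m.
have [g [gc _]] := cok_c.2 _ _ chk0.
by exists g.
Qed.

Lemma cokernel_of_kernel (A B Q K : C) (g : Mor A B) (c : Mor B Q)
    (k : Mor K B) :
  is_cokernel g c -> is_kernel c k -> is_cokernel k c.
Proof.
move=> [cg0 Hc] [ck0 Hk]; split => // Y y yk0.
have [v [kv _]] := Hk _ _ cg0.
by apply: Hc; rewrite -kv compA yk0 comp0m.
Qed.

Lemma factors_through_trans (A B T X : C) (g : Mor A X) (b : Mor B X)
    (t : Mor T X) :
  factors_through g b -> factors_through b t -> factors_through g t.
Proof. by move=> [u <-] [v <-]; exists (comp v u); rewrite compA. Qed.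

Definition kronecker (I : Type) (N : I -> C) (i j : I) : Mor (N i) (N j) :=
  match excluded_middle_informative (i = j) with
  | left e => match e in _ = j' return Mor (N i) (N j') with
              | erefl => idm (N i) end
  | right _ => 0
  end.

Lemma kronecker_diag (I : Type) (N : I -> C) (i : I) :
  kronecker N i i = idm (N i).
Proof.
rewrite /kronecker; case: excluded_middle_informative => [e | //].
by rewrite (proof_irrelevance _ e erefl).
Qed.

Section Product.
Variables (I : Type) (N : I -> C) (P : C) (p : forall i, Mor P (N i)).
Hypothesis prod_p : is_product p.

Lemma product_ext (X : C) (u v : Mor X P) :
  (forall i, comp (p i) u = comp (p i) v) -> u = v.
Proof.
move=> puv; have [w [_ w_uniq]] := prod_p (fun i => comp (p i) v).
by rewrite -(w_uniq u puv); apply: w_uniq.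
Qed.

Lemma kernel_product_intersection (M K : C) (f : Mor M P) (k : Mor K M)
    (Ki : I -> C) (ki : forall i, Mor (Ki i) M) :
  is_kernel f k -> (forall i, is_kernel (comp (p i) f) (ki i)) ->
  is_intersection ki k.
Proof.
move=> ker_k ker_ki; split; first exact: kernel_mono ker_k.
  move=> i; have pfk0 : comp (comp (p i) f) k = 0.
    by rewrite -compA ker_k.1 compm0.
  by have [u [kiu _]] := (ker_ki i).2 _ _ pfk0; exists u.
move=> T t _ t_ki.
have ft0 : comp f t = 0.
  apply: product_ext => i; rewrite compm0.
  have [v <-] := t_ki i.
  by rewrite !compA (ker_ki i).1 comp0m.
have [u [ku _]] := ker_k.2 _ _ ft0.
by exists u.
Qed.

Lemma product_proj_retraction (i : I) : retraction (p i).
Proof.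
have [u [pu _]] := prod_p (kronecker N i).
by exists u; rewrite pu kronecker_diag.
Qed.

End Product.

Section Coproduct.
Variables (I : Type) (M : I -> C) (S : C) (e : forall i, Mor (M i) S).
Hypothesis cop_e : is_coproduct e.

Lemma coproduct_ext (Y : C) (u v : Mor S Y) :
  (forall i, comp u (e i) = comp v (e i)) -> u = v.
Proof.
move=> uve; have [w [_ w_uniq]] := cop_e (fun i => comp v (e i)).
by rewrite -(w_uniq u uve); apply: w_uniq.
Qed.

Lemma coproduct_factors_through (N T : C) (f : Mor S N) (t : Mor T N) :
  (forall i, factors_through (comp f (e i)) t) -> factors_through f t.
Proof.
move=> fe_t; have [w tw] := dependent_functional_choice fe_t.
have [u [ue _]] := cop_e w.
by exists u; apply: coproduct_ext => i; rewrite -compA ue tw.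
Qed.

Lemma coproduct_inj_section (i : I) : section (e i).
Proof.
have [r [re _]] := cop_e (fun j => kronecker M j i).
by exists r; rewrite re kronecker_diag.
Qed.

End Coproduct.

Definition is_image (A B : C) (f : Mor A B) (K : C) (k : Mor K B) : Prop :=
  exists Q (c : Mor B Q), is_cokernel f c /\ is_kernel c k.

Lemma image_factors (A B K : C) (f : Mor A B) (k : Mor K B) :
  is_image f k -> factors_through f k.
Proof.
by move=> [Q [c [[cf0 _] [_ Hk]]]]; have [u [ku _]] := Hk _ _ cf0; exists u.
Qed.

Lemma image_annihilated (A B K Y : C) (f : Mor A B) (k : Mor K B)
    (h : Mor B Y) :
  is_image f k -> comp h f = 0 -> comp h k = 0.
Proof.
move=> [Q [c [[_ Hc] [ck0 _]]]] hf0; have [w [wc _]] := Hc _ _ hf0.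
by rewrite -wc -compA ck0 compm0.
Qed.

Lemma image_least (A B K T : C) (f : Mor A B) (k : Mor K B) (t : Mor T B) :
  (exists D (g : Mor B D), is_kernel g t) ->
  is_image f k -> factors_through f t -> factors_through k t.
Proof.
move=> [D [g [gt0 Ht]]] im_k [u tu].
have gk0 : comp g k = 0.
  by apply: (image_annihilated im_k); rewrite -tu compA gt0 comp0m.
by have [v [tv _]] := Ht _ _ gk0; exists v.
Qed.

Lemma strongly_rickart_mono (M N N' : C) (u : Mor N N') :
  mono u -> strongly_rickart M N' -> strongly_rickart M N.
Proof.
by move=> mono_u SR f K k ker_k; apply: SR (kernel_comp_mono mono_u ker_k).
Qed.

Lemma dual_strongly_rickart_epi (M M' N : C) (r : Mor M' M) :
  epi r -> dual_strongly_rickart M' N -> dual_strongly_rickart M N.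
Proof.
by move=> epi_r DR f Q c cok_c; apply: DR (cokernel_comp_epi epi_r cok_c).
Qed.

End Preadditive.

Section Abelian.
Variable C : precategory.
Hypothesis HC : is_abelian C.

Lemma abelian_kernel (A B : C) (f : Mor A B) :
  exists K (k : Mor K A), is_kernel f k.
Proof. by case: HC => _ [_ Hker _ _ _]; apply: Hker. Qed.

Lemma abelian_mono_kernel (A B : C) (t : Mor A B) :
  mono t -> exists D (g : Mor B D), is_kernel g t.
Proof. by case: HC => _ [_ _ _ Hmono _]; apply: Hmono. Qed.

Lemma abelian_image (A B : C) (f : Mor A B) :
  exists K (k : Mor K B), is_image f k.
Proof.
case: HC => _ [_ _ Hcok _ _]; have [Q [c cok_c]] := Hcok _ _ f.
have [K [k ker_k]] := abelian_kernel c.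
by exists K, k, Q, c.
Qed.

Lemma subobject_choice (I : Type) (X : C) (R : forall i (K : C), Mor K X -> Prop) :
  (forall i, exists K (k : Mor K X), R i K k) ->
  exists (K : I -> C) (k : forall i, Mor (K i) X), forall i, R i (K i) (k i).
Proof.
move=> H; have [Kk RKk] := dependent_functional_choice (T := fun=> {K : C & Mor K X})
  (P := fun i Kk => R i (projT1 Kk) (projT2 Kk))
  (fun i => let: ex_intro K (ex_intro k Rk) := H i in ex_intro _ (existT _ K k) Rk).
by exists (fun i => projT1 (Kk i)), (fun i => projT2 (Kk i)).
Qed.

Lemma kernel_family (I : Type) (X : C) (Y : I -> C)
    (f : forall i, Mor X (Y i)) :
  exists (K : I -> C) (k : forall i, Mor (K i) X), forall i, is_kernel (f i) (k i).
Proof. exact: subobject_choice (fun i => abelian_kernel (f i)). Qed.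

Lemma image_family (I : Type) (X : I -> C) (Y : C)
    (f : forall i, Mor (X i) Y) :
  exists (A : I -> C) (a : forall i, Mor (A i) Y), forall i, is_image (f i) (a i).
Proof. exact: subobject_choice (fun i => abelian_image (f i)). Qed.

Lemma image_coproduct_sum (I : Type) (M : I -> C) (S N K : C)
    (e : forall i, Mor (M i) S) (f : Mor S N) (k : Mor K N)
    (A : I -> C) (a : forall i, Mor (A i) N) :
  is_coproduct e -> is_image f k -> (forall i, is_image (comp f (e i)) (a i)) ->
  is_sum a k.
Proof.
move=> cop_e im_k im_a.
have [Q [c [_ ker_k]]] := im_k.
split; first exact: kernel_mono ker_k.
  move=> i; apply: (image_least _ (im_a i)); first by exists Q, c.
  by apply: (factors_through_trans _ (image_factors im_k)); exists (e i).
move=> T t mono_t a_t.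
apply: (image_least (abelian_mono_kernel mono_t) im_k).
apply: (coproduct_factors_through cop_e) => i.
exact: factors_through_trans (image_factors (im_a i)) (a_t i).
Qed.

Lemma strongly_rickart_product (M : C) (I : Type) (N : I -> C) (P : C)
    (p : forall i, Mor P (N i)) :
  weak_duo M -> SSIP M -> is_product p ->
  (forall i, strongly_rickart M (N i)) -> strongly_rickart M P.
Proof.
move=> wd ssip prod_p SR f K k ker_k.
have [Ki [ki ker_ki]] := kernel_family (fun i => comp (p i) f).
have sec_k : section k.
  apply: (ssip _ _ ki) (kernel_product_intersection prod_p ker_k ker_ki) => i.
  exact: (SR i _ _ _ (ker_ki i)).1.
by split; last exact: wd.
Qed.

Lemma dual_strongly_rickart_coproduct (I : Type) (M : I -> C) (S : C)
    (e : forall i, Mor (M i) S) (N : C) :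
  is_coproduct e -> weak_duo N -> SSSP N ->
  (forall i, dual_strongly_rickart (M i) N) -> dual_strongly_rickart S N.
Proof.
move=> cop_e wd sssp DR f Q c cok_c.
have [K [k ker_k]] := abelian_kernel c.
have cok_k : is_cokernel k c := cokernel_of_kernel cok_c ker_k.
have [A [a im_a]] := image_family (fun i => comp f (e i)).
have sec_a i : section (a i).
  have [Qi [ci [cok_ci ker_a]]] := im_a i.
  exact: kernel_retraction_section ker_a (DR i _ _ _ cok_ci).1.
have sec_k : section k.
  by apply: (sssp _ _ _ sec_a _ _ (image_coproduct_sum cop_e _ im_a)); exists Q, c.
split; first exact: cokernel_section_retraction cok_k sec_k.
exact: cokernel_fully_coinvariant cok_k (wd _ _ sec_k).
Qed.

End Abelian.

Theorem theorem3p5 (C : precategory) (HC : is_abelian C) :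
  (forall (M : C) (I : Type) (N : I -> C) (P : C) (p : forall i, Mor P (N i)),
      weak_duo M -> SSIP M -> is_product p ->
      (strongly_rickart M P <-> forall i, strongly_rickart M (N i)))
  /\
  (forall (I : Type) (M : I -> C) (S : C) (e : forall i, Mor (M i) S) (N : C),
      is_coproduct e -> weak_duo N -> SSSP N ->
      (dual_strongly_rickart S N <-> forall i, dual_strongly_rickart (M i) N)).
Proof.
split=> [M I N P p wd ssip prod_p | I M S e N cop_e wd sssp]; split.
- move=> SR i; have [u pu] := product_proj_retraction prod_p i.
  have sec_u : section u by exists (p i).
  exact: strongly_rickart_mono (section_mono sec_u) SR.
- exact: strongly_rickart_product.
- move=> DR i; have [r re] := coproduct_inj_section cop_e i.
  have ret_r : retraction r by exists (e i).
  exact: dual_strongly_rickart_epi (retraction_epi ret_r) DR.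
- exact: dual_strongly_rickart_coproduct.
Qed.
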